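(* Fix $a>0$ and put $A=4a^2$. For $w>0$ with $A/(2w)>a$, let $S_w=[-A/(2w),A/(2w)]\times[-w/2,w/2]$ be a rectangular city of area $A$ and width $w$, and let the tram line be the segment from $(-a,0)$ to $(a,0)$ (centred in the city, along its long axis). For $p=(x,y)\in\mathbb{R}^2$ let $\mathrm{Proj}(p)=(x^t,0)$ with $x^t=\max(-a,\min(x,a))$, define $$d_{\rm tr}(p_1,p_2)=d_{\rm euc}(p_1,\mathrm{Proj}(p_1))+d_{\rm euc}(\mathrm{Proj}(p_2),p_2),$$ with $d_{\rm euc}$ the Euclidean distance, and let $I(p)=\{q: d_{\rm euc}(p,q)<d_{\rm tr}(p,q)\}$. Let $$F(w)=\frac{1}{A}\iint_{S_w}\frac{\operatorname{area}(I(p)\cap S_w)}{A}\,dp$$ be the average infeasible fraction of the city. Then $\lim_{w\to 0^+}F(w)=\tfrac12$; i.e. as the rectangular city becomes arbitrarily long and narrow at constant area, its Infeasibility Factor tends to $50\%$.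
   Context: The model: a city occupies a planar region with uniform population density; a single straight tram line runs along a segment. The tram distance $d_{\rm tr}$ corresponds to the idealized case of infinite tram speed and zero waiting time: a traveller walks from the departure point to the nearest point of the tram line, rides the tram (at no cost) to the point of the line nearest the destination, and walks to the destination. A journey from $p$ to $q$ is infeasible if the direct Euclidean distance is strictly smaller than the tram distance. The Infeasibility Factor of a city $S$ is the average over $p\in S$ (with respect to area) of $100\cdot\operatorname{area}(I(p)\cap S)/\operatorname{area}(S)$. *)

From HB Require Import structures.
From mathcomp Require Import all_boot all_order all_algebra.
From mathcomp Require Import all_classical all_reals all_analysis.
Set Implicit Arguments. Unset Strict Implicit. Unset Printing Implicit Defensive.
Import Order.TTheory GRing.Theory Num.Theory.
Import numFieldNormedType.Exports.
Local Open Scope classical_set_scope.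
Local Open Scope ring_scope.

Section tram.
Variable R : realType.

Definition deuc (p q : R * R) : R :=
  Num.sqrt ((p.1 - q.1) ^+ 2 + (p.2 - q.2) ^+ 2).

Definition proj_tram (a : R) (p : R * R) : R * R :=
  (Num.max (- a) (Num.min p.1 a), 0).

Definition dtr (a : R) (p1 p2 : R * R) : R :=
  deuc p1 (proj_tram a p1) + deuc (proj_tram a p2) p2.

Definition Infeas (a : R) (p : R * R) : set (R * R) :=
  [set q | deuc p q < dtr a p q].

Definition city_area (a : R) : R := 4 * a ^+ 2.

Definition city (a w : R) : set (R * R) :=
  `[- (city_area a / (2 * w)), city_area a / (2 * w)]%classic
  `*` `[- (w / 2), w / 2]%classic.

Definition area : set (R * R) -> \bar R :=
  (@lebesgue_measure R \x @lebesgue_measure R)%E.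

Definition Ffrac (a w : R) : R :=
  fine (\int[area]_(p in city a w)
          (area (Infeas a p `&` city a w) * ((city_area a)^-1)%:E))%E
  / city_area a.

End tram.

From HB Require Import structures.
From mathcomp Require Import all_boot all_order all_algebra.
From mathcomp Require Import all_classical all_reals all_analysis.
From mathcomp Require Import measurable_realfun ring lra.
Set Implicit Arguments. Unset Strict Implicit. Unset Printing Implicit Defensive.
Import Order.TTheory GRing.Theory Num.Theory.
Import numFieldNormedType.Exports.
Local Open Scope classical_set_scope.
Local Open Scope ring_scope.

(* Write the city as the rectangle [-h,h] x [-k,k] around the tram segment
   [-a,a] x {0}.  Two points beyond the same end of the tram (x, x' >= a + 2k)
   are mutually infeasible: the ride sends both walkers back to that end,
   which costs more than walking straight.  Two points on opposite sides of
   the tram (x >= a, x' <= -a) are always feasible, since reaching the tram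
   costs at most the width of the city.  So a point with x >= a finds
   infeasible at most the part x' >= -a of the city, and at least the whole
   end x' >= a + 2k when x >= a + 2k itself (symmetrically for x <= -a);
   the middle band |x| < a is negligible.  Integrating both bounds gives
   |F - 1/2| <= 2(a + k)/h, and for area 4a^2 and width w we have
   h = 2a^2/w and k = w/2, so the error is O(w/a). *)

Section euclid.
Variable R : realType.
Implicit Types p q : R * R.

Lemma deuc_ge_dist1 p q : `|p.1 - q.1| <= deuc p q.
Proof.
rewrite /deuc -sqrtr_sqr ler_sqrt; last by rewrite addr_ge0 // sqr_ge0.
by rewrite lerDl sqr_ge0.
Qed.

Lemma deuc_le_dist1D2 p q : deuc p q <= `|p.1 - q.1| + `|p.2 - q.2|.
Proof.
rewrite /deuc -[X in _ <= X]ger0_norm ?addr_ge0 // -sqrtr_sqr ler_sqrt ?sqr_ge0 //.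
rewrite [X in _ <= X]sqrrD !real_normK ?num_real // lerD2r lerDl.
by rewrite mulrn_wge0 // mulr_ge0.
Qed.

Lemma deucC p q : deuc p q = deuc q p.
Proof. by rewrite /deuc -sqrrN opprB -[(p.2 - q.2) ^+ 2]sqrrN opprB. Qed.

Definition xflip p : R * R := (- p.1, p.2).

Lemma deuc_xflip p q : deuc (xflip p) (xflip q) = deuc p q.
Proof. by rewrite /deuc /= -opprD sqrrN. Qed.

End euclid.

Section tram.
Variables (R : realType) (a : R).
Implicit Types (p q : R * R) (d : R).

Lemma proj_tram_right p : 0 <= a -> a <= p.1 -> proj_tram a p = (a, 0).
Proof.
move=> a_ge0 ap; rewrite /proj_tram (elimT min_idPr ap).
by rewrite (elimT max_idPr _) //; lra.
Qed.

Lemma proj_tram_left p : 0 <= a -> p.1 <= - a -> proj_tram a p = (- a, 0).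
Proof.
move=> a_ge0 pa; rewrite /proj_tram (elimT min_idPl _); last by lra.
by rewrite (elimT max_idPl pa).
Qed.

Lemma proj_tram_xflip p : 0 <= a -> proj_tram a (xflip p) = xflip (proj_tram a p).
Proof.
move=> a_ge0; have Na_le_a : - a <= a by lra.
rewrite /proj_tram /xflip /=; congr pair.
by rewrite oppr_max oppr_min opprK max_minr (elimT max_idPr Na_le_a) minC maxC.
Qed.

Lemma Infeas_xflip p q : 0 <= a -> Infeas a (xflip p) (xflip q) = Infeas a p q.
Proof. by move=> a_ge0; rewrite /Infeas /= /dtr !proj_tram_xflip // !deuc_xflip. Qed.

Lemma Infeas_sym p q : Infeas a p q = Infeas a q p.
Proof.
by rewrite /Infeas /= /dtr deucC addrC [deuc p _]deucC [deuc _ q]deucC.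
Qed.

Lemma Infeas_right d p q : 0 <= a -> a + d <= p.1 -> a + d <= q.1 ->
  `|p.2 - q.2| < 2 * d -> Infeas a p q.
Proof.
move=> a_ge0 dp dq pq2; have d_gt0 : 0 < d by have := normr_ge0 (p.2 - q.2); lra.
rewrite /Infeas /= /dtr !proj_tram_right //; [|lra|lra].
have := deuc_le_dist1D2 p q; have := deuc_ge_dist1 p (a, 0).
have := deuc_ge_dist1 (a, 0) q; rewrite /= distrC.
have : `|p.1 - q.1| <= p.1 + q.1 - 2 * (a + d) by rewrite ler_norml; lra.
have := ler_norm (p.1 - a); have := ler_norm (q.1 - a); lra.
Qed.

Lemma Infeas_left d p q : 0 <= a -> p.1 <= - (a + d) -> q.1 <= - (a + d) ->
  `|p.2 - q.2| < 2 * d -> Infeas a p q.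
Proof.
move=> a_ge0 dp dq pq2; rewrite -Infeas_xflip //.
by apply: (Infeas_right (d := d)) => /=; lra.
Qed.

Lemma feasible_across p q : 0 <= a -> a <= p.1 -> q.1 <= - a ->
  `|p.2| + `|q.2| <= 2 * a -> ~ Infeas a p q.
Proof.
move=> a_ge0 ap qa pq2; rewrite /Infeas /= /dtr proj_tram_right // proj_tram_left //.
have := deuc_ge_dist1 p q; have := deuc_le_dist1D2 p (a, 0).
have := deuc_le_dist1D2 (- a, 0) q; rewrite /= subr0 sub0r normrN.
by rewrite [`|p.1 - a|]ger0_norm ?[`|- a - q.1|]ger0_norm ?[`|p.1 - q.1|]ger0_norm;
  lra.
Qed.

Lemma measurable_deuc (f g : R * R -> R * R) :
  measurable_fun setT f -> measurable_fun setT g ->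
  measurable_fun setT (fun q => deuc (f q) (g q)).
Proof.
move=> /measurable_fun_pairP[f1 f2] /measurable_fun_pairP[g1 g2].
apply: measurableT_comp (continuous_measurable_fun (@sqrt_continuous R)) _.
by apply: measurable_funD; apply: measurable_funX; apply: measurable_funB.
Qed.

Lemma measurable_Infeas p : measurable (Infeas a p).
Proof.
have mproj : measurable_fun setT (proj_tram a).
  apply/measurable_fun_pairP; split; last exact: measurable_cst.
  by apply: measurable_maxr => //; apply: measurable_minr.
have mdeuc : measurable_fun setT (deuc p) by exact: measurable_deuc.
have mdeuc_proj : measurable_fun setT (fun q => deuc (proj_tram a q) q).
  exact: measurable_deuc.
have mdtr : measurable_fun setT (dtr a p).
  by apply: measurable_funD => //; exact: measurable_cst.
rewrite -[Infeas a p]setTI.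
exact: measurable_fun_ltr mdeuc mdtr measurableT [set true] _.
Qed.

End tram.

(* [area] is a plain definition, so the measure structure of the product
   measure must be declared on it explicitly. *)
HB.instance Definition _ (R : realType) :=
  isMeasure.Build _ (R * R)%type R (@area R) (measure0 (@area R))
    (measure_ge0 (@area R)) (@measure_semi_sigma_additive _ _ _ (@area R)).

Definition rect (R : realType) (h k : R) : set (R * R) :=
  `[- h, h]%classic `*` `[- k, k]%classic.

Definition rect_infeasibility (R : realType) (a h k : R) : R :=
  fine (\int[@area R]_(p in rect h k)
          (area (Infeas a p `&` rect h k) * ((4 * h * k)^-1)%:E))%E / (4 * h * k).

Lemma Ffrac_rect (R : realType) (a w : R) : 0 < w ->
  Ffrac a w = rect_infeasibility a (city_area a / (2 * w)) (w / 2).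
Proof.
move=> w_gt0; rewrite /rect_infeasibility.
by rewrite (_ : 4 * _ * _ = city_area a) //; field; rewrite gt_eqF.
Qed.

Section area.
Variable R : realType.
Implicit Types x y : R.

Lemma in_rectcc x1 x2 y1 y2 (q : R * R) :
  (`[x1, x2] `*` `[y1, y2]) q <-> [/\ x1 <= q.1, q.1 <= x2, y1 <= q.2 & q.2 <= y2].
Proof.
rewrite /= !in_itv /=; split; first by move=> [/andP[? ?] /andP[? ?]].
by move=> [? ? ? ?]; split; apply/andP.
Qed.

Lemma measurable_rectcc x1 x2 y1 y2 :
  measurable (`[x1, x2] `*` `[y1, y2] : set (R * R)).
Proof. by apply: measurableX; exact: measurable_itv. Qed.

Lemma lebesgue_measure_itvcc x y :
  x <= y -> lebesgue_measure `[x, y]%classic = (y - x)%:E.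
Proof.
move=> xy; rewrite lebesgue_measure_itv /= lte_fin.
have [lt|ge] := ltP x y; first by rewrite EFinB.
have -> : y = x by apply/eqP; rewrite eq_le xy ge.
by rewrite subrr.
Qed.

Lemma area_rectcc x1 x2 y1 y2 : x1 <= x2 -> y1 <= y2 ->
  area (`[x1, x2] `*` `[y1, y2]) = ((x2 - x1) * (y2 - y1))%:E.
Proof.
move=> x12 y12; rewrite /area product_measure1E; try exact: measurable_itv.
by rewrite EFinM; congr (_ * _)%E; exact: lebesgue_measure_itvcc.
Qed.

(* The integral of a nonnegative function is a supremum over simple minorants,
   so it is monotone without measurability assumptions; this spares proving
   that [p |-> area (Infeas a p `&` S)] is measurable. *)
Lemma ge0_le_integral_nonmeasurable d (T : measurableType d)
    (mu : {measure set T -> \bar R}) (D : set T) (f g : T -> \bar R) :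
  (forall t, D t -> (0 <= f t)%E) -> (forall t, D t -> (f t <= g t)%E) ->
  (\int[mu]_(t in D) f t <= \int[mu]_(t in D) g t)%E.
Proof.
move=> f0 fg; rewrite ge0_integralE // ge0_integralE /=; last first.
  by move=> t Dt; apply: le_trans (fg t Dt); exact: f0.
apply: ereal_sup_le => _ [s s_le <-]; exists s => // t; apply: le_trans (s_le t) _.
by rewrite /patch; case: ifP => // /[1!inE] Dt; exact: fg.
Qed.

End area.

Lemma near_half_of_bounds (R : realType) (a h k r : R) :
  0 < a -> 0 < k -> a + 2 * k <= h ->
  (h - (a + 2 * k)) * (2 * k) / (4 * h * k) * (2 * ((h - (a + 2 * k)) * (2 * k))) <= r ->
  r <= (h + a) * (2 * k) + 2 * a * (2 * k) ->
  `|r / (4 * h * k) - 1 / 2| <= 2 * (a + k) / h.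
Proof.
move=> a_gt0 k_gt0 ends_le_h lo up.
have h_gt0 : 0 < h by lra.
have A_gt0 : 0 < 4 * h * k by rewrite !mulr_gt0.
have r_ge : 2 * h * k - 8 * k * (a + k) <= r.
  apply: le_trans lo.
  have -> : (h - (a + 2 * k)) * (2 * k) / (4 * h * k)
              * (2 * ((h - (a + 2 * k)) * (2 * k)))
            = 2 * k * (h - (a + 2 * k)) ^+ 2 / h.
    by field; rewrite !gt_eqF.
  rewrite ler_pdivlMr //.
  have := mulr_gt0 (mulr_gt0 h_gt0 k_gt0) a_gt0.
  have := mulr_ge0 (ltW k_gt0) (sqr_ge0 (a + 2 * k)); nra.
have -> : r / (4 * h * k) - 1 / 2 = (r - 2 * h * k) / (4 * h * k).
  by field; rewrite !gt_eqF.
have -> : 2 * (a + k) / h = 8 * k * (a + k) / (4 * h * k).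
  by field; rewrite !gt_eqF.
rewrite ler_norml -mulNr !ler_pM2r ?invr_gt0 //.
by apply/andP; split; nra.
Qed.

Section rectangle_city.
Variables (R : realType) (a h k : R).
Hypotheses (a_gt0 : 0 < a) (k_gt0 : 0 < k) (k_le_a : k <= a)
  (ends_le_h : a + 2 * k <= h).

(* [lra] does not use section hypotheses, so they are passed explicitly. *)
Local Ltac lra_rect :=
  have := a_gt0; have := k_gt0; have := k_le_a; have := ends_le_h; lra.

Let A := 4 * h * k.
Let V : set R := `[- k, k]%classic.
Let S := rect h k.
Let I p := Infeas a p `&` S.
Let Eright : set (R * R) := `[a + 2 * k, h]%classic `*` V.
Let Eleft : set (R * R) := `[- h, - (a + 2 * k)]%classic `*` V.
Let Mid : set (R * R) := `[- a, a]%classic `*` V.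

Let e := (h - (a + 2 * k)) * (2 * k).

Let A_gt0 : 0 < A. Proof. by rewrite /A !mulr_gt0 //; lra_rect. Qed.

Let measurable_I p : measurable (I p).
Proof. by apply: measurableI; [exact: measurable_Infeas | exact: measurable_rectcc]. Qed.

Let measurable_S : measurable S. Proof. exact: measurable_rectcc. Qed.

Let area_Eright : area Eright = e%:E.
Proof. by rewrite area_rectcc; [congr EFin; rewrite /e; ring | lra_rect | lra_rect]. Qed.

Let area_Eleft : area Eleft = e%:E.
Proof. by rewrite area_rectcc; [congr EFin; rewrite /e; ring | lra_rect | lra_rect]. Qed.

Let area_S : area S = A%:E.
Proof. by rewrite area_rectcc; [congr EFin; rewrite /A; ring | lra_rect | lra_rect]. Qed.

Let area_Mid : area Mid = (2 * a * (2 * k))%:E.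
Proof. by rewrite area_rectcc; [congr EFin; ring | lra_rect | lra_rect]. Qed.

Let norm_le_k q : S q -> `|q.2| <= k.
Proof. by move=> /in_rectcc[_ _ q2 q2']; rewrite ler_norml q2 q2'. Qed.

Lemma Eright_sub_Infeas p : Eright p -> Eright `<=` I p.
Proof.
move=> /in_rectcc[p1 _ p2 p2'] q /in_rectcc[q1 q1' q2 q2']; split.
  apply: (Infeas_right (d := 2 * k)) => //; first lra_rect.
  by rewrite ltr_norml; apply/andP; split; lra_rect.
by apply/in_rectcc; split => //; lra_rect.
Qed.

Lemma Eleft_sub_Infeas p : Eleft p -> Eleft `<=` I p.
Proof.
move=> /in_rectcc[_ p1 p2 p2'] q /in_rectcc[q1 q1' q2 q2']; split.
  apply: (Infeas_left (d := 2 * k)) => //; first lra_rect.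
  by rewrite ltr_norml; apply/andP; split; lra_rect.
by apply/in_rectcc; split => //; lra_rect.
Qed.

Lemma Infeas_sub_right p : S p -> a <= p.1 -> I p `<=` `[- a, h]%classic `*` V.
Proof.
move=> Sp ap q [Ipq Sq]; have /in_rectcc[_ q1' q2 q2'] := Sq.
apply/in_rectcc; split => //; rewrite leNgt; apply/negP => qa.
apply: feasible_across ap (ltW qa) _ Ipq; first lra_rect.
by have := norm_le_k Sp; have := norm_le_k Sq; lra_rect.
Qed.

Lemma Infeas_sub_left p : S p -> p.1 <= - a -> I p `<=` `[- h, a]%classic `*` V.
Proof.
move=> Sp pa q [Ipq Sq]; have /in_rectcc[q1 _ q2 q2'] := Sq.
apply/in_rectcc; split => //; rewrite leNgt; apply/negP => aq.
move: Ipq; rewrite Infeas_sym; apply: feasible_across (ltW aq) pa _; first lra_rect.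
by have := norm_le_k Sp; have := norm_le_k Sq; lra_rect.
Qed.

Lemma area_Infeas_ge p : S p ->
  ((e * \1_(Eright `|` Eleft) p)%:E <= area (I p))%E.
Proof.
move=> Sp; rewrite indicE; case: (boolP (p \in Eright `|` Eleft)); last first.
  by rewrite mulr0 measure_ge0.
move=> /set_mem[Ep|Ep]; rewrite mulr1.
- rewrite -area_Eright.
  apply: le_measure; rewrite ?inE; [exact: measurable_rectcc | exact: measurable_I |].
  exact: Eright_sub_Infeas.
- rewrite -area_Eleft.
  apply: le_measure; rewrite ?inE; [exact: measurable_rectcc | exact: measurable_I |].
  exact: Eleft_sub_Infeas.
Qed.

Lemma area_Infeas_outer_le p : S p -> ~ Mid p ->
  (area (I p) <= ((h + a) * (2 * k))%:E)%E.
Proof.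
move=> Sp Mp; have /in_rectcc[_ _ p2 p2'] := Sp.
have [ap|pa] := lerP a p.1.
  rewrite (_ : _%:E = area (`[- a, h]%classic `*` V)); last first.
    by rewrite area_rectcc; [congr EFin; ring | lra_rect | lra_rect].
  apply: le_measure; rewrite ?inE; [exact: measurable_I | exact: measurable_rectcc |].
  exact: Infeas_sub_right.
have [pa'|ap'] := lerP p.1 (- a).
  rewrite (_ : _%:E = area (`[- h, a]%classic `*` V)); last first.
    by rewrite area_rectcc; [congr EFin; ring | lra_rect | lra_rect].
  apply: le_measure; rewrite ?inE; [exact: measurable_I | exact: measurable_rectcc |].
  exact: Infeas_sub_left.
by exfalso; apply: Mp; apply/in_rectcc; split => //; exact: ltW.
Qed.

Lemma area_Infeas_le_rect p : (area (I p) <= A%:E)%E.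
Proof.
rewrite -area_S.
apply: le_measure; rewrite ?inE; [exact: measurable_I | exact: measurable_rectcc |].
by move=> q [].
Qed.

Lemma integral_Infeas_ge :
  ((e / A * (2 * e))%:E <= \int[@area R]_(p in S) (area (I p) * (A^-1)%:E))%E.
Proof.
set E := Eright `|` Eleft.
have mE : measurable E by apply: measurableU; exact: measurable_rectcc.
have ES : E `<=` S.
  by move=> q [] /in_rectcc[q1 q1' q2 q2']; apply/in_rectcc; split => //; lra_rect.
have ErEl : Eright `&` Eleft = set0.
  by apply/seteqP; split => // q [/in_rectcc[q1 _ _ _] /in_rectcc[_ q1' _ _]]; lra_rect.
have eA_ge0 : 0 <= e / A.
  by apply: divr_ge0; [rewrite /e; apply: mulr_ge0; lra_rect | exact: ltW].
have -> : ((e / A * (2 * e))%:E = \int[@area R]_(p in S) (e / A * \1_E p)%:E)%E.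
  rewrite (integralZl_indic measurable_S (fun=> E)) //=; last first.
    by move=> /lt_geF; rewrite eA_ge0.
  rewrite integral_indic // (setIidl ES) measureU //; try exact: measurable_rectcc.
  rewrite (_ : (area Eright + area Eleft)%R = (e + e)%:E); last first.
    by rewrite area_Eright area_Eleft.
  by rewrite -EFinM; congr EFin; ring.
apply: ge0_le_integral_nonmeasurable => [p _|p Sp]; first by rewrite lee_fin mulr_ge0.
rewrite (_ : _%:E = (e * \1_E p)%:E * (A^-1)%:E)%E; last by rewrite -EFinM mulrAC.
by apply: lee_wpmul2r; [rewrite lee_fin invr_ge0 ltW | exact: area_Infeas_ge].
Qed.

Lemma integral_Infeas_le :
  (\int[@area R]_(p in S) (area (I p) * (A^-1)%:E)
     <= ((h + a) * (2 * k) + 2 * a * (2 * k))%:E)%E.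
Proof.
set c := (h + a) * (2 * k) / A.
have c_ge0 : 0 <= c.
  by apply: divr_ge0; [apply: mulr_ge0; lra_rect | exact: ltW].
have MS : Mid `<=` S.
  by move=> q /in_rectcc[q1 q1' q2 q2']; apply/in_rectcc; split => //; lra_rect.
have Ainv_ge0 : (0 <= (A^-1)%:E)%E by rewrite lee_fin invr_ge0 ltW.
have <- : (\int[@area R]_(p in S) (c + \1_Mid p)%:E
           = ((h + a) * (2 * k) + 2 * a * (2 * k))%:E)%E.
  under eq_integral => p _ do rewrite EFinD.
  rewrite ge0_integralD //; last first.
    by apply/measurable_EFinP; apply: measurable_indic; exact: measurable_rectcc.
  rewrite integral_cst // integral_indic //; last exact: measurable_rectcc.
  transitivity (c%:E * A%:E + (2 * a * (2 * k))%:E)%E.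
    congr (_ * _ + _)%E; first exact: area_S.
    exact: etrans (congr1 _ (setIidl MS)) area_Mid.
  by rewrite -EFinM -EFinD divfK // gt_eqF.
apply: ge0_le_integral_nonmeasurable => [p _|p Sp]; first by rewrite mule_ge0.
rewrite indicE; have [Mp|Mp] := pselect (Mid p).
  rewrite (mem_set Mp) EFinD (le_trans _ (_ : 1%:E <= _)%E) ?leeDr ?lee_fin //.
  rewrite (_ : 1%:E = A%:E * (A^-1)%:E)%E; last by rewrite -EFinM divff // gt_eqF.
  by apply: lee_wpmul2r => //; exact: area_Infeas_le_rect.
rewrite (memNset Mp) addr0 (_ : c%:E = ((h + a) * (2 * k))%:E * (A^-1)%:E)%E //.
by apply: lee_wpmul2r => //; exact: area_Infeas_outer_le.
Qed.

Lemma rect_infeasibility_near_half :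
  `|rect_infeasibility a h k - 1 / 2| <= 2 * (a + k) / h.
Proof.
have lo := integral_Infeas_ge; have up := integral_Infeas_le.
rewrite /rect_infeasibility -/A.
move: lo up; case: (\int[@area R]_(p in S) _)%E => [r||] //=; rewrite !lee_fin => lo up.
exact: near_half_of_bounds a_gt0 k_gt0 ends_le_h lo up.
Qed.

End rectangle_city.

Lemma Ffrac_near_half (R : realType) (a w : R) : 0 < a -> 0 < w -> w <= a ->
  `|Ffrac a w - 1 / 2| <= 2 * w / a.
Proof.
move=> a_gt0 w_gt0 w_le_a; rewrite Ffrac_rect //.
have -> : city_area a / (2 * w) = 2 * a ^+ 2 / w.
  by rewrite /city_area; field; rewrite gt_eqF.
have ends_le : a + 2 * (w / 2) <= 2 * a ^+ 2 / w by rewrite ler_pdivlMr //; nra.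
apply: le_trans (rect_infeasibility_near_half a_gt0 _ _ ends_le) _; [lra | lra |].
have -> : 2 * (a + w / 2) / (2 * a ^+ 2 / w) = w / a + (w / a) ^+ 2 / 2.
  by field; rewrite !gt_eqF.
have : w / a <= 1 by rewrite ler_pdivrMr // mul1r.
have : 0 < w / a by exact: divr_gt0.
nra.
Qed.

Theorem mainTheorem2 (R : realType) (a : R) (ha : 0 < a) :
  Ffrac a w @[w --> 0^'+] --> (1 / 2 : R).
Proof.
apply/cvgrPdist_le => e e_gt0; near=> w.
have w_gt0 : 0 < w by near: w; exact: nbhs_right_gt.
have w_lt_a : w < a by near: w; exact: nbhs_right_lt.
have w_small : w < e * a / 2 by near: w; apply: nbhs_right_lt; rewrite divr_gt0 ?mulr_gt0.
rewrite distrC; apply: le_trans (Ffrac_near_half ha w_gt0 (ltW w_lt_a)) _.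
by rewrite ler_pdivrMr //; lra.
Unshelve. all: by end_near. Qed.
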